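(* Let $V$ be a $K$-vector space and $A=\mathrm{Tricub}(V)$ the free cubical trialgebra on $V$. Consider the chain complex $$C^{\mathrm{Tricub}}_n(A)=K[Q_{n-1}]\otimes A^{\otimes n}\quad(n\ge1),\qquad d=\sum_{i=1}^{n-1}(-1)^i d_i,$$ where, for $X=(X_1,\dots,X_{n-1})\in Q_{n-1}$, $$d_i(X;a_1,\dots,a_n)=(d_i(X);a_1,\dots,a_i\circ_i^X a_{i+1},\dots,a_n).$$ Here $d_i(X)\in Q_{n-2}$ is obtained by deleting the coordinate $X_i$, and $\circ_i^X$ is $\dashv$, $\perp$ or $\vdash$ according as $X_i=-1$, $0$ or $+1$. Then the homology of this complex is $V$ in degree $1$ and $0$ in all degrees $\ge2$.
   Context: A cubical trialgebra is a $K$-vector space $A$ with three bilinear operations $\dashv,\vdash,\perp$ satisfying the nine relations $(x\circ_1y)\circ_2z=x\circ_1(y\circ_2z)$ for all $\circ_1,\circ_2\in\{\dashv,\vdash,\perp\}$. $\mathrm{Tricub}(V)$ denotes the free cubical trialgebra on $V$. $Q_m=\{-1,0,+1\}^m$, and $K[Q_m]$ is the vector space with basis $Q_m$. *)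

From HB Require Import structures.
From mathcomp Require Import all_boot all_order all_algebra.
Set Implicit Arguments. Unset Strict Implicit. Unset Printing Implicit Defensive.
Import GRing.Theory.
Local Open Scope ring_scope.

(* The three coordinate values of Q_m = {-1,0,+1}^m.
   CLeft = -1 (operation -|), CMid = 0 (operation _|_), CRight = +1 (operation |-). *)
Inductive cube3 := CLeft | CMid | CRight.

Section Tricub.
Variable K : fieldType.

Definition bilinear_ops (A : lmodType K) (op : cube3 -> A -> A -> A) : Prop :=
  (forall o (c : K) x y z, op o (c *: x + y) z = c *: op o x z + op o y z) /\
  (forall o (c : K) x y z, op o z (c *: x + y) = c *: op o z x + op o z y).

Definition cubical_trialgebra (A : lmodType K) (op : cube3 -> A -> A -> A) : Prop :=
  bilinear_ops op /\
  forall o1 o2 (x y z : A), op o2 (op o1 x y) z = op o1 x (op o2 y z).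

Definition klinear (U W : lmodType K) (f : U -> W) : Prop :=
  forall (c : K) x y, f (c *: x + y) = c *: f x + f y.

Definition trialg_morphism (A B : lmodType K) (opA : cube3 -> A -> A -> A)
  (opB : cube3 -> B -> B -> B) (g : A -> B) : Prop :=
  klinear g /\ forall o x y, g (opA o x y) = opB o (g x) (g y).

Definition is_free_tricub (V A : lmodType K) (opA : cube3 -> A -> A -> A)
  (iota : V -> A) : Prop :=
  cubical_trialgebra opA /\ klinear iota /\
  forall (B : lmodType K) (opB : cube3 -> B -> B -> B),
    cubical_trialgebra opB -> forall f : V -> B, klinear f ->
    exists g : A -> B,
      trialg_morphism opA opB g /\ (forall v, g (iota v) = f v) /\
      forall g' : A -> B, trialg_morphism opA opB g' ->
        (forall v, g' (iota v) = f v) -> forall a, g' a = g a.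

(* An element of C_n is represented by a formal finite sum of
   coefficients times generators (X; a_1,...,a_n), X in Q_{n-1}. *)
Definition fsum (A : lmodType K) := seq (K * (seq cube3 * seq A)).

Definition wf_fsum (A : lmodType K) (n : nat) (s : fsum A) : bool :=
  all (fun t => (size t.2.1 == n.-1) && (size t.2.2 == n)) s.

Definition multilinear_n (A W : lmodType K) (n : nat)
  (phi : seq cube3 -> seq A -> W) : Prop :=
  forall X (l r : seq A) (c : K) (x y : A),
    size X = n.-1 -> (size l + size r).+1 = n ->
    phi X (l ++ (c *: x + y) :: r) =
      c *: phi X (l ++ x :: r) + phi X (l ++ y :: r).

Definition eval_fsum (A W : lmodType K) (phi : seq cube3 -> seq A -> W)
  (s : fsum A) : W :=
  \sum_(t <- s) t.1 *: phi t.2.1 t.2.2.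

(* A formal sum represents 0 in K[Q_{n-1}] (x) A^{(x) n} iff it is killed by
   every linear map out of the tensor product, i.e. by every map multilinear
   in the A-arguments (universal property of the tensor product). *)
Definition tensor_zero (A : lmodType K) (n : nat) (s : fsum A) : Prop :=
  forall (W : lmodType K) (phi : seq cube3 -> seq A -> W),
    multilinear_n n phi -> eval_fsum phi s = 0.

Definition del_at (T : Type) (s : seq T) (j : nat) : seq T :=
  take j s ++ drop j.+1 s.

(* face i = j.+1 (0-based j): delete X_i and replace a_i, a_{i+1} by
   a_i o_i^X a_{i+1} *)
Definition face (A : lmodType K) (op : cube3 -> A -> A -> A)
  (j : nat) (X : seq cube3) (a : seq A) : seq cube3 * seq A :=
  (del_at X j,
   take j a ++ op (nth CMid X j) (nth 0 a j) (nth 0 a j.+1) :: drop j.+2 a).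

Definition dterm (A : lmodType K) (op : cube3 -> A -> A -> A) (n : nat)
  (t : K * (seq cube3 * seq A)) : fsum A :=
  [seq ((-1) ^+ j.+1 * t.1, face op j t.2.1 t.2.2) | j <- iota 0 n.-1].

Definition dfsum (A : lmodType K) (op : cube3 -> A -> A -> A) (n : nat)
  (s : fsum A) : fsum A := flatten (map (dterm op n) s).

Definition fneg (A : lmodType K) (s : fsum A) : fsum A :=
  [seq (- t.1, t.2) | t <- s].

Definition gen1 (A : lmodType K) (a : A) : fsum A := [:: (1, ([::], [:: a]))].

End Tricub.

(* Every element of A = Tricub(V) has the form iota v0 + sum_t (iota v_t) o_t w_t, and
   freeness makes this normal form unique up to multilinearity: a linear map on A may be
   prescribed on iota V and, bilinearly, on the products (iota v) o w.  Splitting off the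
   first tensor factor in this way gives a contracting homotopy
     h (X; a1, ..., an) = - sum_t (o_t X; iota v_t, w_t, a2, ..., an).
   Chains are only known through the multilinear functionals phi on them, so x - d (h x) is
   computed dually: for n >= 2 every multilinear phi has a multilinear psi in degree n - 1
   with phi (x - d (h x)) = psi (d x), hence cycles are boundaries.  In degree 1,
   x - d (h x) is the iota-part of x, and the projection A -> V killing all products shows
   that no nonzero iota v is a boundary. *)

From HB Require Import structures.
From mathcomp Require Import all_boot all_order all_algebra.
From mathcomp Require Import boolp functions zify.
Set Implicit Arguments. Unset Strict Implicit. Unset Printing Implicit Defensive.
Import GRing.Theory.
Local Open Scope ring_scope.

Section KLinear.
Variables (K : fieldType) (U W : lmodType K) (f : U -> W).
Hypothesis fL : klinear f.

HB.instance Definition _ := GRing.isLinear.Build K U W *:%R f fL.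

Lemma klinear0 : f 0 = 0. Proof. exact: linear0. Qed.
Lemma klinearD x y : f (x + y) = f x + f y. Proof. exact: linearD. Qed.
Lemma klinearZ c x : f (c *: x) = c *: f x. Proof. exact: linearZ. Qed.
Lemma klinear_sum (I : Type) (r : seq I) (F : I -> U) :
  f (\sum_(i <- r) F i) = \sum_(i <- r) f (F i).
Proof. exact: linear_sum. Qed.
End KLinear.

Section FreeLift.
Variables (K : fieldType) (V A : lmodType K) (op : cube3 -> A -> A -> A) (iota : V -> A).
Hypothesis Hfree : is_free_tricub op iota.
Variables (M : lmodType K) (opM : cube3 -> M -> M -> M) (P : M -> Prop).
Hypothesis P0 : P 0.
Hypothesis P_lin : forall c x y, P x -> P y -> P (c *: x + y).
Hypothesis P_op : forall o x y, P x -> P y -> P (opM o x y).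
Hypothesis opM_linl : forall o c x y z, P x -> P y -> P z ->
  opM o (c *: x + y) z = c *: opM o x z + opM o y z.
Hypothesis opM_linr : forall o c x y z, P x -> P y -> P z ->
  opM o z (c *: x + y) = c *: opM o z x + opM o z y.
Hypothesis opM_assoc : forall o1 o2 x y z, P x -> P y -> P z ->
  opM o2 (opM o1 x y) z = opM o1 x (opM o2 y z).

Definition subtri_pred : {pred M} := fun x => `[< P x >].

Fact subtri_pred_closed : GRing.subsemimod_closed subtri_pred.
Proof.
split; first split.
- exact/asboolP.
- by move=> x y /asboolP Px /asboolP Py; apply/asboolP; rewrite -[x]scale1r; apply: P_lin.
- by move=> c x /asboolP Px; apply/asboolP; rewrite -[_ *: _]addr0; apply: P_lin.
Qed.
HB.instance Definition _ := GRing.isSubmodClosed.Build K M subtri_pred subtri_pred_closed.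

Record subtri := SubTri { subtri_val :> M; subtri_valP : subtri_val \in subtri_pred }.
HB.instance Definition _ := [isSub for subtri_val].
HB.instance Definition _ := [Choice of subtri by <:].
HB.instance Definition _ := [SubChoice_isSubLmodule of subtri by <:].

Lemma subtriP (x : subtri) : P x.
Proof. exact/asboolP/subtri_valP. Qed.

Definition subtri_op o (x y : subtri) : subtri :=
  SubTri (introT (asboolP _) (P_op o (subtriP x) (subtriP y))).

Lemma subtri_op_trialgebra : cubical_trialgebra subtri_op.
Proof.
split; first split.
- by move=> o c x y z; apply: val_inj; apply: opM_linl; apply: subtriP.
- by move=> o c x y z; apply: val_inj; apply: opM_linr; apply: subtriP.
- by move=> o1 o2 x y z; apply: val_inj; apply: opM_assoc; apply: subtriP.
Qed.

Lemma free_lift (f : V -> M) : klinear f -> (forall v, P (f v)) ->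
  exists g : A -> M, [/\ trialg_morphism op opM g, forall v, g (iota v) = f v
                       & forall a, P (g a)].
Proof.
move=> fL fP; pose fS v : subtri := SubTri (introT (asboolP _) (fP v)).
have fSL : klinear fS by move=> c x y; apply: val_inj; rewrite /= fL.
have [_ [_ univ]] := Hfree.
have [g [[gL gM] [gf _]]] := univ _ _ subtri_op_trialgebra fS fSL.
exists (fun a => val (g a)); split.
- by split=> [c x y|o x y]; rewrite ?gL ?gM.
- by move=> v; rewrite gf.
- by move=> a; apply: subtriP.
Qed.
End FreeLift.

Definition cube3_nat (o : cube3) : nat :=
  match o with CLeft => 0 | CMid => 1 | CRight => 2 end.
Definition nat_cube3 (n : nat) : cube3 :=
  match n with 0 => CLeft | 1 => CMid | _ => CRight end.
Lemma cube3_natK : cancel cube3_nat nat_cube3. Proof. by case. Qed.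
HB.instance Definition _ := Equality.copy cube3 (can_type cube3_natK).

Section ChainComplex.
Variables (K : fieldType) (A : lmodType K) (op : cube3 -> A -> A -> A).
Implicit Types s : fsum A.

Lemma wf_fsum_cat n s1 s2 : wf_fsum n (s1 ++ s2) = wf_fsum n s1 && wf_fsum n s2.
Proof. exact: all_cat. Qed.

Lemma wf_fsum_fneg n s : wf_fsum n (fneg s) = wf_fsum n s.
Proof. by rewrite /wf_fsum all_map. Qed.

Lemma wf_dfsum n s : wf_fsum n s -> wf_fsum n.-1 (dfsum op n s).
Proof.
move=> /allP ws; apply/allP => u /flatten_mapP [t /ws /andP [/eqP sX /eqP sa]].
case/mapP => j; rewrite mem_iota add0n => jn ->{u} /=.
rewrite /del_at !size_cat /= !size_drop !size_takel; lia.
Qed.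

Section Evaluation.
Variable W : lmodType K.
Implicit Types phi : seq cube3 -> seq A -> W.

Definition multilinear phi : Prop :=
  forall X l r (c : K) x y,
    phi X (l ++ (c *: x + y) :: r) = c *: phi X (l ++ x :: r) + phi X (l ++ y :: r).

Lemma multilinear_head phi X a : multilinear phi -> klinear (fun x => phi X (x :: a)).
Proof. by move=> phiML c x y; apply: (phiML X [::]). Qed.

Lemma multilinear_n_of n phi : multilinear phi -> multilinear_n n phi.
Proof. by move=> phiML X l r c x y _ _; apply: phiML. Qed.

Definition restrict_deg n phi : seq cube3 -> seq A -> W :=
  fun X a => if (size X == n.-1) && (size a == n) then phi X a else 0.

Lemma restrict_deg_multilinear n phi :
  multilinear_n n phi -> multilinear (restrict_deg n phi).
Proof.
move=> phiML X l r c x y; rewrite /restrict_deg !size_cat /=.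
case: ifP => [/andP [/eqP sX /eqP sa]|_]; last by rewrite scaler0 addr0.
by apply: phiML => //; rewrite -sa addnS.
Qed.

Lemma eval_restrict_deg n phi s :
  wf_fsum n s -> eval_fsum (restrict_deg n phi) s = eval_fsum phi s.
Proof. by move=> /allP ws; apply: eq_big_seq => t /ws; rewrite /restrict_deg => ->. Qed.

Lemma eval_cat phi s1 s2 : eval_fsum phi (s1 ++ s2) = eval_fsum phi s1 + eval_fsum phi s2.
Proof. exact: big_cat. Qed.

Lemma eval_fneg phi s : eval_fsum phi (fneg s) = - eval_fsum phi s.
Proof. by rewrite /eval_fsum big_map -sumrN; apply: eq_bigr => t _; rewrite scaleNr. Qed.

Definition eval_d phi m X a : W :=
  \sum_(j <- iota 0 m.-1) (-1) ^+ j.+1 *: phi (face op j X a).1 (face op j X a).2.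

Lemma eval_dfsum phi m s :
  eval_fsum phi (dfsum op m s) = \sum_(t <- s) t.1 *: eval_d phi m t.2.1 t.2.2.
Proof.
rewrite /eval_fsum /dfsum big_flatten big_map; apply: eq_bigr => t _.
by rewrite big_map scaler_sumr; apply: eq_bigr => j _; rewrite scalerA mulrC.
Qed.

Lemma eval_d_cons phi m x X b a0 a :
  eval_d phi m.+2 (x :: X) (b :: a0 :: a) =
    - phi X (op x b a0 :: a) - eval_d (fun X' a' => phi (x :: X') (b :: a')) m.+1 X (a0 :: a).
Proof.
rewrite /eval_d /= big_cons -(addn0 1%N) iotaDl big_map /face /del_at /= !drop0.
rewrite expr1 scaleN1r -sumrN; congr (_ + _); apply: eq_bigr => j _.
by rewrite add0n add1n exprS mulN1r scaleNr.
Qed.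

Lemma eval_d_sum (I : Type) (r : seq I) (F : I -> seq cube3 -> seq A -> W) m X a :
  eval_d (fun X' a' => \sum_(i <- r) F i X' a') m X a = \sum_(i <- r) eval_d (F i) m X a.
Proof. by rewrite /eval_d exchange_big; apply: eq_bigr => j _; rewrite scaler_sumr. Qed.

Lemma eval_dN phi m X a : eval_d (fun X' a' => - phi X' a') m X a = - eval_d phi m X a.
Proof. by rewrite /eval_d -sumrN; apply: eq_bigr => j _; rewrite scalerN. Qed.
End Evaluation.

Lemma tensor_zero_multilinear n s : wf_fsum n s ->
  (forall (W : lmodType K) (phi : seq cube3 -> seq A -> W), multilinear phi ->
     eval_fsum phi s = 0) -> tensor_zero n s.
Proof.
move=> ws s0 W phi phiML.
by rewrite -(eval_restrict_deg phi ws); apply/s0/restrict_deg_multilinear.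
Qed.
End ChainComplex.

Section FreeTricub.
Variables (K : fieldType) (V A : lmodType K) (op : cube3 -> A -> A -> A) (iota : V -> A).
Hypothesis Hfree : is_free_tricub op iota.

Lemma iota_linear : klinear iota. Proof. by case: Hfree => _ []. Qed.

Lemma op_linearl o z : klinear (fun x => op o x z).
Proof. by case: Hfree => [[[opL _] _] _] c x y; apply: opL. Qed.

Lemma op_linearr o z : klinear (op o z).
Proof. by case: Hfree => [[[_ opR] _] _] c x y; apply: opR. Qed.

Lemma op_assoc o1 o2 x y z : op o2 (op o1 x y) z = op o1 x (op o2 y z).
Proof. by case: Hfree => [[_ assoc] _]; apply: assoc. Qed.

Lemma free_morphism_id (h : A -> A) :
  trialg_morphism op op h -> (forall v, h (iota v) = iota v) -> forall a, h a = a.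
Proof.
move=> hM hiota a; have [opT [iotaL univ]] := Hfree.
have [g [_ [_ g_uniq]]] := univ A op opT iota iotaL.
have idM : trialg_morphism op op id by [].
by rewrite (g_uniq h hM hiota); apply/esym/(g_uniq id idM).
Qed.

Definition tricub_comb (v0 : V) (l : seq (cube3 * V * A)) : A :=
  iota v0 + \sum_(t <- l) op t.1.1 (iota t.1.2) t.2.

Lemma op_tricub_comb o v0 l b :
  op o (tricub_comb v0 l) b =
    tricub_comb 0 ((o, v0, b) :: [seq (t.1.1, t.1.2, op o t.2 b) | t <- l]).
Proof.
rewrite /tricub_comb (klinear0 iota_linear) add0r big_cons big_map /=.
rewrite (klinearD (op_linearl o b)) (klinear_sum (op_linearl o b)); congr (_ + _).
by apply: eq_bigr => t _; rewrite op_assoc.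
Qed.

Lemma tricub_comb_lin c v l v' l' :
  c *: tricub_comb v l + tricub_comb v' l' =
    tricub_comb (c *: v + v') ([seq (t.1.1, c *: t.1.2, t.2) | t <- l] ++ l').
Proof.
rewrite /tricub_comb iota_linear big_cat big_map /= scalerDr scaler_sumr addrACA.
congr (_ + (_ + _)); apply: eq_bigr => t _.
by rewrite (klinearZ iota_linear) (klinearZ (op_linearl _ _)).
Qed.

Lemma exists_tricub_comb a : exists d : V * seq (cube3 * V * A), a = tricub_comb d.1 d.2.
Proof.
pose P a := exists d : V * seq (cube3 * V * A), a = tricub_comb d.1 d.2.
have P0 : P 0.
  by exists (0, [::]); rewrite /tricub_comb big_nil addr0 (klinear0 iota_linear).
have P_lin c x y : P x -> P y -> P (c *: x + y).
  by move=> [[v l] ->] [[v' l'] ->]; rewrite tricub_comb_lin; eexists (_, _).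
have P_op o x y : P x -> P y -> P (op o x y).
  by move=> [[v l] ->] _; rewrite op_tricub_comb; eexists (_, _).
have P_iota v : P (iota v) by exists (v, [::]); rewrite /tricub_comb big_nil addr0.
have [g [gM g_iota gP]] := free_lift Hfree (P := P) P0 P_lin P_op
  (fun o c x y z _ _ _ => op_linearl o z c x y) (fun o c x y z _ _ _ => op_linearr o z c x y)
  (fun o1 o2 x y z _ _ _ => op_assoc o1 o2 x y z) iota_linear P_iota.
by rewrite -(free_morphism_id gM g_iota a); apply: gP.
Qed.

Lemma tricub_comb_head :
  exists pi : A -> V, klinear pi /\ forall v0 l, pi (tricub_comb v0 l) = v0.
Proof.
have [_ [_ univ]] := Hfree.
have zero_trialgebra : cubical_trialgebra (fun (_ : cube3) (_ _ : V) => 0 : V).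
  by split; first split=> *; rewrite ?scaler0 ?addr0.
have [pi [[piL piM] [pi_iota _]]] := univ V _ zero_trialgebra id (fun c x y => erefl).
exists pi; split=> // v0 l; rewrite /tricub_comb (klinearD piL) pi_iota (klinear_sum piL).
by rewrite big1 ?addr0 // => t _; apply: piM.
Qed.

Section TailFunctional.
Variable W : lmodType K.
Local Notation B := (A * (cube3 -> A -> W) * W)%type.

(* Designed so that a |-> (a, fun o z => H (op o a z), H a) is a trialgebra morphism
   into B whenever H is linear. *)
Definition tail_op o (x y : B) : B :=
  (op o x.1.1 y.1.1, fun p z => x.1.2 o (op p y.1.1 z), x.1.2 o y.1.1).

Definition tail_pred (x : B) : Prop := forall o, klinear (x.1.2 o).

Lemma tail_pred0 : tail_pred 0.
Proof. by move=> o c x y /=; rewrite scaler0 addr0. Qed.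

Lemma tail_pred_lin c x y : tail_pred x -> tail_pred y -> tail_pred (c *: x + y).
Proof.
move=> Px Py o c' u u' /=; rewrite !fctE /= Px Py.
by rewrite !scalerDr !scalerA [c * c']mulrC addrACA.
Qed.

Lemma tail_pred_op o x y : tail_pred x -> tail_pred y -> tail_pred (tail_op o x y).
Proof. by move=> Px _ p c u u' /=; rewrite op_linearr Px. Qed.

Lemma tail_op_linl o c x y z : tail_pred x -> tail_pred y -> tail_pred z ->
  tail_op o (c *: x + y) z = c *: tail_op o x z + tail_op o y z.
Proof. by move=> _ _ _; rewrite /tail_op /= op_linearl. Qed.

Lemma tail_op_linr o c x y z : tail_pred x -> tail_pred y -> tail_pred z ->
  tail_op o z (c *: x + y) = c *: tail_op o z x + tail_op o z y.
Proof.
move=> _ _ Pz; rewrite /tail_op /= op_linearr Pz; congr (_, _, _).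
by apply/funext => p; apply/funext => u; rewrite !fctE /= op_linearl Pz.
Qed.

Lemma tail_op_assoc o1 o2 x y z : tail_pred x -> tail_pred y -> tail_pred z ->
  tail_op o2 (tail_op o1 x y) z = tail_op o1 x (tail_op o2 y z).
Proof.
move=> _ _ _; rewrite /tail_op /= op_assoc; congr (_, _, _).
by apply/funext => p; apply/funext => u; rewrite op_assoc.
Qed.

Lemma tricub_comb_tail (G : cube3 -> V -> A -> W) :
  (forall o w, klinear (fun v => G o v w)) -> (forall o v, klinear (G o v)) ->
  exists H : A -> W, klinear H /\
    forall v0 l, H (tricub_comb v0 l) = \sum_(t <- l) G t.1.1 t.1.2 t.2.
Proof.
move=> G_linV G_linA; pose f v : B := (iota v, fun p z => G p v z, 0).
have fL : klinear f.
  move=> c v v'; rewrite /f.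
  transitivity (c *: iota v + iota v', c *: (fun p z => G p v z) + (fun p z => G p v' z),
                c *: 0 + 0 : W); last by [].
  congr (_, _, _); [exact: iota_linear | | by rewrite scaler0 addr0].
  by apply/funext => p; apply/funext => u; rewrite !fctE /= G_linV.
have [g [[gL gM] g_iota _]] := free_lift Hfree tail_pred0 tail_pred_lin tail_pred_op
  tail_op_linl tail_op_linr tail_op_assoc fL (fun v o => G_linA o v).
have g1 a : (g a).1.1 = a.
  apply: (free_morphism_id (h := fun a => (g a).1.1)) => [|v]; last by rewrite g_iota.
  by split=> [c x y|o x y]; rewrite ?gL ?gM.
have HL : klinear (fun a => (g a).2) by move=> c x y /=; rewrite gL.
exists (fun a => (g a).2); split=> // v0 l.
rewrite /tricub_comb (klinearD HL) /= g_iota add0r (klinear_sum HL).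
by apply: eq_bigr => t _ /=; rewrite gM g_iota /= g1.
Qed.
End TailFunctional.

Definition tricub_dec (a : A) := projT1 (cid (exists_tricub_comb a)).

Lemma tricub_decE a : tricub_comb (tricub_dec a).1 (tricub_dec a).2 = a.
Proof. by rewrite /tricub_dec; case: cid. Qed.

Section Contraction.
Variables (W : lmodType K) (phi : seq cube3 -> seq A -> W).
Hypothesis phiML : multilinear phi.

Lemma exists_contraction : exists Psi : seq cube3 -> seq A -> W, multilinear Psi /\
  forall Z v0 l b,
    Psi Z (tricub_comb v0 l :: b) = - \sum_(t <- l) phi (t.1.1 :: Z) (iota t.1.2 :: t.2 :: b).
Proof.
have tail (Zb : seq cube3 * seq A) : exists H : A -> W, klinear H /\ forall v0 l,
    H (tricub_comb v0 l) = \sum_(t <- l) - phi (t.1.1 :: Zb.1) (iota t.1.2 :: t.2 :: Zb.2).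
  apply: (@tricub_comb_tail W (fun o v w => - phi (o :: Zb.1) (iota v :: w :: Zb.2)))
    => [o w | o v] c x y.
  - by rewrite iota_linear (phiML _ [::]) scalerN opprD.
  - by rewrite (phiML _ [:: iota v]) scalerN opprD.
have [H HP] := choice tail.
exists (fun Z b => if b is b1 :: b' then H (Z, b') b1 else 0); split.
- move=> Z [|b1 l] r c x y /=; first exact: (HP (Z, r)).1.
  rewrite -[b1]tricub_decE !(HP _).2 scaler_sumr -big_split /=; apply: eq_bigr => t _.
  by rewrite (phiML _ [:: _, _ & l]) scalerN opprD.
- by move=> Z v0 l b; rewrite (HP (Z, b)).2 sumrN.
Qed.

Variable Psi : seq cube3 -> seq A -> W.
Hypothesis PsiE : forall Z v0 l b,
  Psi Z (tricub_comb v0 l :: b) = - \sum_(t <- l) phi (t.1.1 :: Z) (iota t.1.2 :: t.2 :: b).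

Lemma contraction_identity m X0 X v0 l a1 a :
  phi (X0 :: X) (tricub_comb v0 l :: a1 :: a) +
    \sum_(t <- l) eval_d op phi m.+3 (t.1.1 :: X0 :: X) (iota t.1.2 :: t.2 :: a1 :: a) =
  eval_d op Psi m.+2 (X0 :: X) (tricub_comb v0 l :: a1 :: a).
Proof.
have Psi_tail : (fun X' a' => Psi (X0 :: X') (tricub_comb v0 l :: a')) =
    (fun X' a' => - \sum_(t <- l) phi (t.1.1 :: X0 :: X') (iota t.1.2 :: t.2 :: a')).
  by apply/funext => X'; apply/funext => a'; apply: PsiE.
rewrite eval_d_cons Psi_tail eval_dN eval_d_sum op_tricub_comb PsiE big_cons big_map /=.
under eq_bigr => t _ do rewrite !eval_d_cons /=.
rewrite {1}/tricub_comb (klinearD (multilinear_head _ _ phiML)).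
rewrite (klinear_sum (multilinear_head _ _ phiML)) /=.
under [X in _ + X = _]eq_bigr => t _ do rewrite opprB opprK.
by rewrite !big_split /= sumrN !opprK -addrA addNKr addrCA addrC.
Qed.
End Contraction.

Definition homotopy_gen (t : K * (seq cube3 * seq A)) : fsum A :=
  let: (c, (X, a)) := t in
  if a is a1 :: a' then
    [seq (- c, (u.1.1 :: X, iota u.1.2 :: u.2 :: a')) | u <- (tricub_dec a1).2]
  else [::].

Definition homotopy (s : fsum A) : fsum A := flatten (map homotopy_gen s).

Lemma wf_homotopy n s : wf_fsum n.+1 s -> wf_fsum n.+2 (homotopy s).
Proof.
move=> /allP ws; apply/allP => u /flatten_mapP [[c [X [|a1 a]]] /ws] //=.
by case/andP => /eqP sX /eqP [sa] /mapP [t _ ->]; rewrite /= sX sa !eqxx.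
Qed.

Lemma eval_sub_d_homotopy (W : lmodType K) (phi : seq cube3 -> seq A -> W) n s :
  wf_fsum n.+1 s ->
  eval_fsum phi s - eval_fsum phi (dfsum op n.+2 (homotopy s)) =
  \sum_(t <- s) t.1 *: (phi t.2.1 t.2.2 + \sum_(u <- (tricub_dec (head 0 t.2.2)).2)
      eval_d op phi n.+2 (u.1.1 :: t.2.1) (iota u.1.2 :: u.2 :: behead t.2.2)).
Proof.
move=> /allP ws; rewrite eval_dfsum /homotopy big_flatten big_map -sumrN -big_split /=.
apply: eq_big_seq => -[c [X [|a1 a]]] /ws /andP [_ /eqP //] _ /=.
rewrite big_map scalerDr scaler_sumr -sumrN; congr (_ + _); apply: eq_bigr => u _ /=.
by rewrite scaleNr opprK.
Qed.

Lemma homology1_onto x : wf_fsum 1 x ->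
  exists v y, wf_fsum 2 y /\ tensor_zero 1 (x ++ fneg (gen1 (iota v)) ++ fneg (dfsum op 2 y)).
Proof.
move=> wx; exists (\sum_(t <- x) t.1 *: (tricub_dec (head 0 t.2.2)).1), (homotopy x).
split; first exact: wf_homotopy.
apply: tensor_zero_multilinear => [|W phi phiML].
  by rewrite !wf_fsum_cat !wf_fsum_fneg wx (wf_dfsum op (wf_homotopy wx)).
have phi1L : klinear (fun v => phi [::] [:: iota v]).
  by move=> c v v'; rewrite iota_linear (phiML _ [::]).
have eval_d2 o b w : eval_d op phi 2 [:: o] [:: b; w] = - phi [::] [:: op o b w].
  by rewrite /eval_d big_seq1 expr1 scaleN1r.
rewrite !eval_cat !eval_fneg addrCA eval_sub_d_homotopy // /eval_fsum big_seq1 scale1r /=.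
rewrite (klinear_sum phi1L) -sumrN -big_split big1_seq // => -[c [X a]] /(allP wx).
case/andP=> /eqP/size0nil ->; case: a => [|a1 []] //= _.
rewrite -[in phi _ [:: a1]](tricub_decE a1) /tricub_comb.
rewrite (klinearD (multilinear_head _ _ phiML)) (klinear_sum (multilinear_head _ _ phiML)).
under [X in _ *: (_ + X)]eq_bigr => u _ do rewrite eval_d2.
by rewrite (klinearZ phi1L) sumrN addrK addNr.
Qed.

Lemma homology1_inj v y : tensor_zero 1 (gen1 (iota v) ++ fneg (dfsum op 2 y)) -> v = 0.
Proof.
have [pi [piL piE]] := tricub_comb_head.
have pi_iota v' : pi (iota v') = v' by have := piE v' [::]; rewrite /tricub_comb big_nil addr0.
have pi_op o a b : pi (op o a b) = 0 by rewrite -[a]tricub_decE op_tricub_comb piE.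
have piML : multilinear_n 1 (fun _ a => pi (head 0 a)).
  by move=> X [|? ?] [|? ?] c a b _ //= _; apply: piL.
move=> /(_ V _ piML); rewrite eval_cat eval_fneg eval_dfsum big1 => [|t _].
  by rewrite oppr0 addr0 /eval_fsum big_seq1 scale1r /= pi_iota.
by rewrite /eval_d big_seq1 /face take0 /= pi_op !scaler0.
Qed.

Lemma homology_acyclic n : (2 <= n)%N -> forall x, wf_fsum n x ->
  tensor_zero n.-1 (dfsum op n x) ->
  exists y, wf_fsum n.+1 y /\ tensor_zero n (x ++ fneg (dfsum op n.+1 y)).
Proof.
case: n => [|[|n]] // _ x wx dx0; exists (homotopy x); split; first exact: wf_homotopy.
apply: tensor_zero_multilinear => [|W phi phiML].
  by rewrite wf_fsum_cat wf_fsum_fneg wx (wf_dfsum op (wf_homotopy wx)).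
have [Psi [PsiML PsiE]] := exists_contraction phiML.
rewrite eval_cat eval_fneg eval_sub_d_homotopy //.
rewrite -[in RHS](dx0 W Psi (multilinear_n_of PsiML)) eval_dfsum.
apply: eq_big_seq => -[c [X a]] /(allP wx) /andP [/= sX sa]; congr (_ *: _).
case: X sX sa => // X0 X _; case: a => [|a1 [|a2 a]] // _.
by rewrite -[in RHS](tricub_decE a1) -(contraction_identity phiML PsiE) tricub_decE.
Qed.
End FreeTricub.

Theorem theorem5p6 (K : fieldType) (V A : lmodType K)
  (op : cube3 -> A -> A -> A) (iota : V -> A) :
  is_free_tricub op iota ->
  (* H_1 = V : the map V -> H_1 = C_1 / im d, v |-> [iota v], is bijective *)
  ((forall x : fsum A, wf_fsum 1 x ->
      exists (v : V) (y : fsum A), wf_fsum 2 y /\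
        tensor_zero 1 (x ++ fneg (gen1 (iota v)) ++ fneg (dfsum op 2 y))) /\
   (forall (v : V) (y : fsum A), wf_fsum 2 y ->
      tensor_zero 1 (gen1 (iota v) ++ fneg (dfsum op 2 y)) -> v = 0)) /\
  (* H_n = 0 for n >= 2 : every cycle is a boundary *)
  (forall n : nat, (2 <= n)%N -> forall x : fsum A, wf_fsum n x ->
      tensor_zero n.-1 (dfsum op n x) ->
      exists y : fsum A, wf_fsum n.+1 y /\
        tensor_zero n (x ++ fneg (dfsum op n.+1 y))).
Proof.
move=> Hfree; split; [split|].
- exact: (homology1_onto Hfree).
- by move=> v y _; apply: (homology1_inj Hfree).
- exact: (homology_acyclic Hfree).
Qed.
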